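(* Let $N\ge 1$, $B\in\mathbb{R}$, and for $i=1,\dots,N$ let $D_i>0$, $b_i>0$, $a_i\in\mathbb{R}$. For $q\in(0,1)$ define $c_i(q):=-\dfrac{a_i}{b_i}-\dfrac{1}{b_i}\big[\ln(1-q)-\ln q\big]$, and for $\bm q=(q_1,\dots,q_N)\in(0,1)^N$ define $$g(\bm q):=\sum_{i=1}^N D_i q_i\,c_i(q_i)-B.$$ Then $g$ is strongly convex on $(0,1)^N$.
   Context: $c_i(q)$ is the inverse of the logit market-share function $q_i(c)=1/(1+\exp\{-(a_i+b_ic)\})$, mapping a market share $q$ to the marketing cost achieving it; $g$ is the budget-constraint function (total cost minus budget $B$). *)

From HB Require Import structures.
From mathcomp Require Import all_boot all_order all_algebra.
From mathcomp Require Import all_classical all_reals all_analysis.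
Set Implicit Arguments. Unset Strict Implicit. Unset Printing Implicit Defensive.
Import Order.TTheory GRing.Theory Num.Theory.
Local Open Scope ring_scope.

Definition cost {R : realType} (a b q : R) : R :=
  - (a / b) - b^-1 * (ln (1 - q) - ln q).

Definition gfun {R : realType} (N : nat) (D a b : 'I_N -> R) (B : R)
  (q : 'I_N -> R) : R :=
  \sum_(i < N) D i * q i * cost (a i) (b i) (q i) - B.

Definition open_unit_box {R : realType} (N : nat) (q : 'I_N -> R) : Prop :=
  forall i, 0 < q i < 1.

Definition sqnorm {R : realType} (N : nat) (x : 'I_N -> R) : R :=
  \sum_(i < N) x i ^+ 2.

Definition strongly_convex_on {R : realType} (N : nat)
  (S : ('I_N -> R) -> Prop) (f : ('I_N -> R) -> R) : Prop :=
  exists mu : R, 0 < mu /\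
    forall (x y : 'I_N -> R) (t : R), S x -> S y -> 0 <= t <= 1 ->
      f (fun i => t * x i + (1 - t) * y i) <=
        t * f x + (1 - t) * f y
        - mu / 2%:R * t * (1 - t) * sqnorm (fun i => x i - y i).

(** Writing [q c_i(q) = - (a_i / b_i) q + (1 / b_i) (q ln q - q ln (1 - q))],
   each summand of [g] is an affine function plus a positive multiple of
   [xlogit q := q ln q - q ln (1 - q)], so it suffices that [xlogit] is
   strongly convex on (0,1).  This follows from a quadratic lower bound on
   its Bregman divergence: for [x ln x] one has
   [y ln (y/z) - y + z >= (sqrt y - sqrt z)^2 >= (y - z)^2 / 4] on (0,1],
   while [- q ln (1 - q) = u ln u - ln u] with [u = 1 - q] is convex. *)
From mathcomp Require Import all_boot all_order all_algebra.
From mathcomp Require Import all_classical all_reals all_analysis.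
From mathcomp Require Import ring lra.
Import Order.TTheory GRing.Theory Num.Theory.
Local Open Scope ring_scope.

Set Implicit Arguments.
Unset Strict Implicit.

Section XlogitTangent.
Variable R : realType.
Implicit Types (x y z t u v w mu : R).

Lemma ln_le_subr1 w : 0 < w -> ln w <= w - 1.
Proof. by move=> w0; have := @le_ln1Dx R (w - 1); rewrite (addrC 1) subrK; apply; lra. Qed.

Lemma xlnx_bregman_ge y z : 0 < y -> 0 < z ->
  (Num.sqrt y - Num.sqrt z) ^+ 2 <= y * ln y - z * ln z - (ln z + 1) * (y - z).
Proof.
move=> y0 z0; have p0 : 0 < Num.sqrt y by rewrite sqrtr_gt0.
have r0 : 0 < Num.sqrt z by rewrite sqrtr_gt0.
rewrite -[in leRHS](sqr_sqrtr (ltW y0)) -[in leRHS](sqr_sqrtr (ltW z0)).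
move: (Num.sqrt y) (Num.sqrt z) p0 r0 => p r p0 r0.
rewrite !lnXn // !mulr2n.
have ln_rp : ln r - ln p <= r / p - 1.
  by rewrite -ln_div ?posrE //; apply: ln_le_subr1; rewrite divr_gt0.
have := ler_wpM2l (ltW (exprn_gt0 2 p0)) ln_rp.
have -> : p ^+ 2 * (r / p - 1) = p * r - p ^+ 2 by field; rewrite gt_eqF.
nra.
Qed.

Lemma sqr_sub_le_sqr_sub_sqrt y z : 0 <= y <= 1 -> 0 <= z <= 1 ->
  (y - z) ^+ 2 / 4%:R <= (Num.sqrt y - Num.sqrt z) ^+ 2.
Proof.
move=> /andP[y0 y1] /andP[z0 z1]; rewrite ler_pdivrMr //.
rewrite -(sqr_sqrtr y0) in y1; rewrite -(sqr_sqrtr z0) in z1.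
rewrite -[in leLHS](sqr_sqrtr y0) -[in leLHS](sqr_sqrtr z0).
have := sqrtr_ge0 y; have := sqrtr_ge0 z.
move: (Num.sqrt y) (Num.sqrt z) y1 z1 => p r p1 r1 r0 p0.
have sum_le2 : (p + r) ^+ 2 <= 4%:R by nra.
have -> : (p ^+ 2 - r ^+ 2) ^+ 2 = (p - r) ^+ 2 * (p + r) ^+ 2 by ring.
by rewrite ler_wpM2l ?sqr_ge0.
Qed.

Lemma xlnx_bregman_ge_sqr y z : 0 < y <= 1 -> 0 < z <= 1 ->
  (y - z) ^+ 2 / 4%:R <= y * ln y - z * ln z - (ln z + 1) * (y - z).
Proof.
move=> /andP[y0 y1] /andP[z0 z1].
apply: le_trans (xlnx_bregman_ge y0 z0).
by apply: sqr_sub_le_sqr_sub_sqrt; rewrite ?y1 ?z1 ltW.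
Qed.

Lemma ln_le_tangent u v : 0 < u -> 0 < v -> ln u - ln v <= (u - v) / v.
Proof.
move=> u0 v0; rewrite -ln_div ?posrE //.
apply: le_trans (ln_le_subr1 _) _; first by rewrite divr_gt0.
by rewrite le_eqVlt; apply/orP; left; apply/eqP; field; rewrite gt_eqF.
Qed.

Definition xlogit x := x * ln x - x * ln (1 - x).

Definition xlogit_slope x := ln x - ln (1 - x) + (1 - x)^-1.

Lemma xlogit_tangent y z : 0 < y < 1 -> 0 < z < 1 ->
  xlogit z + xlogit_slope z * (y - z) + 2^-1 / 2%:R * (y - z) ^+ 2 <= xlogit y.
Proof.
move=> /andP[y0 y1] /andP[z0 z1].
have xlnx : (y - z) ^+ 2 / 4%:R <= y * ln y - z * ln z - (ln z + 1) * (y - z).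
  by apply: xlnx_bregman_ge_sqr; rewrite ?y0 ?z0 ltW.
have u0 : 0 < 1 - y by rewrite subr_gt0.
have v0 : 0 < 1 - z by rewrite subr_gt0.
have ulnu := le_trans (sqr_ge0 _) (xlnx_bregman_ge u0 v0).
have lnu := ln_le_tangent u0 v0.
have -> : 2^-1 / 2%:R = 4%:R^-1 :> R by field.
rewrite /xlogit /xlogit_slope; nra.
Qed.

End XlogitTangent.

Section StrongConvexityOnUnitInterval.
Variable R : realType.
Implicit Types (x y z t mu k : R) (f : R -> R).

Definition strongly_convex01 mu f := forall x y t,
  0 < x < 1 -> 0 < y < 1 -> 0 <= t <= 1 ->
  f (t * x + (1 - t) * y) <= t * f x + (1 - t) * f y
                             - mu / 2%:R * t * (1 - t) * (x - y) ^+ 2.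

Lemma conv_in01 x y t : 0 < x < 1 -> 0 < y < 1 -> 0 <= t <= 1 ->
  0 < t * x + (1 - t) * y < 1.
Proof.
move=> /andP[x0 x1] /andP[y0 y1] /andP[t0 t1].
have [x0' y0'] : 0 <= x /\ 0 <= y by rewrite !ltW.
have [x1s y1s] : 0 < 1 - x /\ 0 < 1 - y by rewrite !subr_gt0.
have [x1' y1'] := (ltW x1s, ltW y1s).
have t1' : 0 <= 1 - t by rewrite subr_ge0.
(* [t x + (1 - t) y >= x y] and [t (1 - x) + (1 - t) (1 - y) >= (1 - x) (1 - y)]. *)
have := mulr_ge0 (mulr_ge0 t0 x0') y1'; have := mulr_ge0 (mulr_ge0 t1' y0') x1'.
have := mulr_ge0 (mulr_ge0 t0 x1') y0'; have := mulr_ge0 (mulr_ge0 t1' y1') x0'.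
have := mulr_gt0 x0 y0; have := mulr_gt0 x1s y1s.
by move=> *; apply/andP; split; lra.
Qed.

(* The two tangent bounds at [z], toward [x] and toward [y], are weighted by
   [t] and [1 - t]; the first-order terms cancel since
   [t (x - z) + (1 - t) (y - z) = 0]. *)
Lemma chord_le_of_tangents fx fy fz s c x y t : 0 <= t <= 1 ->
  let z := t * x + (1 - t) * y in
  fz + s * (x - z) + c * (x - z) ^+ 2 <= fx ->
  fz + s * (y - z) + c * (y - z) ^+ 2 <= fy ->
  fz <= t * fx + (1 - t) * fy - c * t * (1 - t) * (x - y) ^+ 2.
Proof.
move=> /andP[t0 t1] z; rewrite {}/z => tan_x tan_y.
have t1' : 0 <= 1 - t by rewrite subr_ge0.
have := ler_wpM2l t0 tan_x; have := ler_wpM2l t1' tan_y.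
lra.
Qed.

Lemma strongly_convex01_tangent mu f (f' : R -> R) :
  (forall y z, 0 < y < 1 -> 0 < z < 1 ->
     f z + f' z * (y - z) + mu / 2%:R * (y - z) ^+ 2 <= f y) ->
  strongly_convex01 mu f.
Proof.
move=> tan x y t x01 y01 t01.
have z01 := conv_in01 x01 y01 t01.
exact: chord_le_of_tangents t01 (tan _ _ x01 z01) (tan _ _ y01 z01).
Qed.

Lemma strongly_convex01_le mu mu' f : mu' <= mu ->
  strongly_convex01 mu f -> strongly_convex01 mu' f.
Proof.
move=> le_mu cvx x y t x01 y01 /[dup] t01 /andP[t0 t1].
apply: le_trans (cvx x y t x01 y01 t01) _; rewrite lerD2l lerN2.
have : 0 <= t * (1 - t) * (x - y) ^+ 2 by rewrite mulr_ge0 ?sqr_ge0 ?mulr_ge0 ?subr_ge0.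
nra.
Qed.

Lemma strongly_convex01_scale_affine mu k l f : 0 <= k ->
  strongly_convex01 mu f ->
  strongly_convex01 (k * mu) (fun x => k * f x + l * x).
Proof.
move=> k0 cvx x y t x01 y01 t01.
have := ler_wpM2l k0 (cvx x y t x01 y01 t01); lra.
Qed.

Lemma strongly_convex_on_separable (N : nat) (f : 'I_N -> R -> R) mu (B : R) :
  0 < mu -> (forall i, strongly_convex01 mu (f i)) ->
  strongly_convex_on (@open_unit_box R N) (fun q => \sum_(i < N) f i (q i) - B).
Proof.
move=> mu0 cvx; exists mu; split=> // x y t x01 y01 t01; rewrite /sqnorm.
rewrite (_ : t * _ + _ - _ = \sum_(i < N) (t * f i (x i) + (1 - t) * f i (y i)
           - mu / 2%:R * t * (1 - t) * (x i - y i) ^+ 2) - B); last first.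
  by rewrite sumrB big_split /= -!mulr_sumr; ring.
by rewrite lerD2r; apply: ler_sum => i _; apply: cvx.
Qed.

End StrongConvexityOnUnitInterval.

Section LogitCost.
Variable R : realType.

Lemma cost_termE (D a b : R) : 0 < b ->
  (fun q => D * q * cost a b q) = (fun q => D / b * xlogit q + - (D * a / b) * q).
Proof. by move=> b0; apply/funext => q; rewrite /cost /xlogit; field; rewrite gt_eqF. Qed.

Lemma strongly_convex01_cost_term (D a b : R) : 0 < D -> 0 < b ->
  strongly_convex01 (D / b / 2%:R) (fun q => D * q * cost a b q).
Proof.
move=> D0 b0; rewrite cost_termE //.
apply: strongly_convex01_scale_affine; first by rewrite divr_ge0 ?ltW.
exact: (strongly_convex01_tangent (@xlogit_tangent R)).
Qed.

End LogitCost.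

Lemma exists_pos_lbound (R : realFieldType) (N : nat) (k : 'I_N -> R) :
  (forall i, 0 < k i) -> exists mu, 0 < mu /\ forall i, mu <= k i.
Proof.
move=> k0; set S := \sum_(i < N) (k i)^-1.
have S0 : 0 <= S by apply: sumr_ge0 => i _; rewrite invr_ge0 ltW.
exists (1 + S)^-1; split=> [|i]; first by rewrite invr_gt0; lra.
rewrite -[k i]invrK lef_pV2 ?posrE ?invr_gt0 //; last by lra.
have : (k i)^-1 <= S by rewrite /S (bigD1 i) //= lerDl sumr_ge0 // => j _; rewrite invr_ge0 ltW.
lra.
Qed.

Unset Implicit Arguments.
Set Strict Implicit.

Theorem theorem2 (R : realType) (N : nat) (hN : (1 <= N)%N)
  (B : R) (D a b : 'I_N -> R)
  (hD : forall i, 0 < D i) (hb : forall i, 0 < b i) :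
  strongly_convex_on (@open_unit_box R N) (gfun D a b B).
Proof.
have [mu [mu0 le_mu]] := @exists_pos_lbound R N (fun i => D i / b i / 2%:R)
  (fun i => divr_gt0 (divr_gt0 (hD i) (hb i)) (ltr0Sn _ 1)).
apply: (strongly_convex_on_separable
  (f := fun i q => D i * q * cost (a i) (b i) q) B mu0) => i.
exact: strongly_convex01_le (le_mu i) (strongly_convex01_cost_term _ (hD i) (hb i)).
Qed.
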